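(* Let $p$ be an odd prime, $m$ a positive integer, $q=p^m$. Let $l,r,s,e$ be positive integers such that $l\ge3$ is odd, $\gcd(l,e)=1$, and $q-1=ls$. If $P(x)=x^r(x^{es}+1)$ is a permutation polynomial of $\mathbb{F}_q$, then $\gcd(r,s)=1$, $p\mid 2^s-1$, and $l\nmid 2r+es$.
   Context: A permutation polynomial of $\mathbb{F}_q$ is a polynomial inducing a bijection $\mathbb{F}_q\to\mathbb{F}_q$. *)

From mathcomp Require Import all_boot all_order all_algebra all_field.
Set Implicit Arguments. Unset Strict Implicit. Unset Printing Implicit Defensive.
Import GRing.Theory.
Local Open Scope ring_scope.

Definition is_perm_map (F : finFieldType) (f : F -> F) : Prop := bijective f.

Definition Ppoly (F : finFieldType) (r e s : nat) : {poly F} :=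
  'X^r * ('X^(e * s) + 1).

From mathcomp Require Import all_boot all_order all_algebra all_field.
From mathcomp Require Import cyclic ring.
Set Implicit Arguments. Unset Strict Implicit. Unset Printing Implicit Defensive.
Import GRing.Theory.
Local Open Scope ring_scope.

(* Write P(x) = x^r (x^n + 1) with n = es, and recall q - 1 = ls.
   If d = gcd(r, s), a primitive d-th root of unity z has P(z) = 2 = P(1),
   hence d = 1.  Since q - 1 is even and l is odd, s is
   even and so r is odd.  As P fixes 0 it permutes F^*; comparing the
   products of P(x) and of x over F^* (the latter squares to 1, so its r-th
   power is itself) gives prod_{x <> 0} (x^n + 1) = 1.  But x^n runs s times
   over the l-th roots of unity w^i, and prod_i (w^i + 1) = 2 for odd l, so
   2^s = 1 in F.  Finally, if l | 2r + n then P(w^-1) = P(w) for a primitive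
   l-th root of unity w, forcing w^2 = 1, impossible for l >= 3. *)

Definition Pfun (F : fieldType) (r n : nat) (x : F) : F := x ^+ r * (x ^+ n + 1).

Lemma horner_Ppoly (F : finFieldType) r e s (x : F) :
  (Ppoly F r e s).[x] = Pfun r (e * s) x.
Proof. by rewrite /Ppoly !hornerE. Qed.

Lemma Pfun_inv (F : fieldType) r n (x : F) :
  x != 0 -> x ^+ (2 * r + n) = 1 -> Pfun r n x^-1 = Pfun r n x.
Proof.
move=> x_neq0 xE; rewrite /Pfun !exprVn.
set a := x ^+ r; set b := x ^+ n.
have abb : a * a * b = 1 by rewrite -xE mul2n -addnn !exprD.
have a_neq0 : a != 0 by rewrite expf_neq0.
have b_neq0 : b != 0 by rewrite expf_neq0.
have aV : a^-1 = a * b by apply: (mulfI a_neq0); rewrite mulfV // mulrA abb.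
have bV : b^-1 = a * a by apply: (mulfI b_neq0); rewrite mulfV // mulrC abb.
rewrite aV bV; transitivity ((a * a * b) * a + a * b); first by ring.
by rewrite abb mul1r mulrDr mulr1 addrC.
Qed.

Section PrimRootProducts.

Variables (F : fieldType) (l : nat) (z : F).
Hypothesis zP : l.-primitive_root z.

Lemma prod_prim_root_exprD1 : odd l -> \prod_(i < l) (z ^+ i + 1) = 2.
Proof.
move=> odd_l.
have := congr1 (horner^~ (-1)) (factor_Xn_sub_1 zP).
rewrite /= horner_prod !hornerE -signr_odd odd_l expr1 big_mkord => prodE.
have -> : \prod_(i < l) (z ^+ i + 1) = \prod_(i < l) - ('X - (z ^+ i)%:P).[-1].
  by apply: eq_bigr => i _; rewrite !hornerE opprB opprK.
rewrite (prodrN _ (fun i : 'I_l => ('X - (z ^+ i)%:P).[-1])).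
by rewrite card_ord prodE -signr_odd odd_l expr1 mulN1r opprD opprK.
Qed.

Lemma prod_prim_root_exprM k (h : F -> F) :
  \prod_(i < l * k) h (z ^+ i) = (\prod_(i < l) h (z ^+ i)) ^+ k.
Proof.
elim: k => [|k IHk]; first by rewrite muln0 big_ord0.
rewrite mulnSr big_split_ord IHk exprSr; congr (_ * _).
by apply: eq_bigr => i _; rewrite exprD exprM (prim_expr_order zP) expr1n mul1r.
Qed.

End PrimRootProducts.

Section FinFieldUnits.

Variable F : finFieldType.

Lemma finField_card_pred_gt0 : (0 < #|F|.-1)%N.
Proof. by rewrite -subn1 subn_gt0 finNzRing_gt1. Qed.

Lemma expf_card_pred (x : F) : x != 0 -> x ^+ #|F|.-1 = 1.
Proof.
move=> x_neq0; apply: (mulIf x_neq0).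
by rewrite mul1r -exprSr prednK ?expf_card // ltnW ?finNzRing_gt1.
Qed.

Lemma finField_prim_root : exists g : F, (#|F|.-1).-primitive_root g.
Proof.
suff /hasP[g _ gP] : has (#|F|.-1).-primitive_root (enum (predC1 (0 : F))).
  by exists g.
apply: has_prim_root; first exact: finField_card_pred_gt0.
- by apply/allP => x; rewrite mem_enum unity_rootE => /expf_card_pred->.
- exact: enum_uniq.
- by rewrite -cardE cardC1.
Qed.

Lemma prod_nonzero_prim_root (g : F) (h : F -> F) :
  (#|F|.-1).-primitive_root g ->
  \prod_(x : F | x != 0) h x = \prod_(i < #|F|.-1) h (g ^+ i).
Proof.
move=> gP; have g_neq0 : g != 0 by rewrite (prim_root_eq0 gP) -lt0n finField_card_pred_gt0.
rewrite -(big_imset h (h := fun i : 'I_#|F|.-1 => g ^+ i)) /=; last first.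
  move=> i j _ _ /eqP; rewrite (eq_prim_root_expr gP) !modn_small // => /eqP.
  exact: val_inj.
apply: eq_bigl => x; apply/idP/imsetP => [/expf_card_pred/(prim_rootP gP)[i ->] | [i _ ->]].
  by exists i.
by rewrite expf_neq0.
Qed.

Lemma prod_nonzero_sqr : (\prod_(x : F | x != 0) x) ^+ 2 = 1.
Proof.
have prodV : \prod_(x : F | x != 0) x^-1 = \prod_(x : F | x != 0) x.
  rewrite (reindex_inj invr_inj) /=.
  by apply: eq_big => x; rewrite ?invr_eq0 ?invrK.
rewrite expr2 -{1}prodV prodfV mulVf //.
by apply/prodf_neq0.
Qed.

Lemma prod_nonzero_inj (f : F -> F) : injective f -> f 0 = 0 ->
  \prod_(x : F | x != 0) f x = \prod_(x : F | x != 0) x.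
Proof.
move=> f_inj f0; rewrite [RHS](reindex_inj f_inj) /=.
by apply: eq_bigl => x; rewrite -[in RHS]f0 (inj_eq f_inj).
Qed.

End FinFieldUnits.

Lemma prod_nonzero_exprD1 (F : finFieldType) l s e :
  #|F|.-1 = (l * s)%N -> odd l -> coprime l e ->
  \prod_(x : F | x != 0) (x ^+ (e * s) + 1) = 2 ^+ s.
Proof.
move=> qE odd_l coprime_le; have [g gP] := finField_prim_root F.
rewrite (prod_nonzero_prim_root _ gP) qE; rewrite qE in gP.
have wP : l.-primitive_root (g ^+ (s * e)).
  have := dvdn_prim_root gP (dvdn_mulr s (dvdnn l)).
  by rewrite mulKn ?odd_gt0 // exprM => /prim_root_exp_coprime->; rewrite coprime_sym.
under eq_bigr => i _ do rewrite -exprM mulnC (mulnC e) exprM.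
by rewrite (prod_prim_root_exprM wP s (fun y => y + 1)) prod_prim_root_exprD1.
Qed.

Section InjectivePfun.

Variables (F : finFieldType) (r n : nat).
Hypothesis Pinj : injective (Pfun r n : F -> F).

Lemma Pfun_inj_coprime s : (s %| #|F|.-1)%N -> (s %| n)%N -> coprime r s.
Proof.
move=> s_dvd_q s_dvd_n; have [g gP] := finField_prim_root F.
have zP := dvdn_prim_root gP (dvdn_trans (dvdn_gcdr r s) s_dvd_q).
set z := g ^+ _ in zP.
have z1 k : (gcdn r s %| k)%N -> z ^+ k = 1.
  by move=> dvd_k; apply/eqP; rewrite -(prim_order_dvd zP).
have z_eq1 : z = 1.
  by apply: Pinj; rewrite /Pfun !z1 ?dvdn_gcdl ?(dvdn_trans (dvdn_gcdr r s)) // !expr1n.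
by rewrite /coprime -dvdn1 (prim_order_dvd zP) z_eq1 expr1n.
Qed.

Lemma Pfun_inj_prod_nonzero : (0 < r)%N -> odd r ->
  \prod_(x : F | x != 0) (x ^+ n + 1) = 1.
Proof.
move=> r_gt0 odd_r; set Pi := \prod_(x : F | x != 0) x.
have P0 : Pfun r n (0 : F) = 0 by rewrite /Pfun expr0n gtn_eqF // mul0r.
have Pi_neq0 : Pi != 0 by apply/prodf_neq0.
have PiXr : Pi ^+ r = Pi.
  by rewrite -(odd_double_half r) odd_r -mul2n exprD exprM prod_nonzero_sqr expr1n mulr1.
have := prod_nonzero_inj Pinj P0; rewrite /Pfun big_split prodrXl /= -/Pi PiXr.
by move=> PiE; apply: (mulfI Pi_neq0); rewrite PiE mulr1.
Qed.

Lemma Pfun_inj_not_dvd l (w : F) : l.-primitive_root w -> (2 < l)%N ->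
  ~~ (l %| 2 * r + n)%N.
Proof.
move=> wP l_gt2; apply/negP; rewrite (prim_order_dvd wP) => /eqP wE.
have w_neq0 : w != 0 by rewrite (prim_root_eq0 wP) gtn_eqF // ltnW // ltnW.
have w_inv : w^-1 = w := Pinj (Pfun_inv w_neq0 wE).
have : (l %| 2)%N by rewrite (prim_order_dvd wP) expr2 -{1}w_inv mulVf.
by move/(dvdn_leq (isT : (0 < 2)%N)); rewrite leqNgt l_gt2.
Qed.

End InjectivePfun.

Theorem theorem4p1 (p m : nat) (F : finFieldType) (l r s e : nat) :
  prime p -> odd p -> (0 < m)%N -> #|F| = (p ^ m)%N ->
  (0 < l)%N -> (0 < r)%N -> (0 < s)%N -> (0 < e)%N ->
  (3 <= l)%N -> odd l -> coprime l e -> (#|F| - 1)%N = (l * s)%N ->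
  is_perm_map (fun x : F => (Ppoly F r e s).[x]) ->
  [/\ coprime r s, (p %| 2 ^ s - 1)%N & ~~ (l %| 2 * r + e * s)%N].
Proof.
move=> prime_p odd_p _ qE _ r_gt0 _ _ l_gt2 odd_l coprime_le.
rewrite subn1 => qE' /bij_inj P_inj.
have Pinj : injective (Pfun r (e * s) : F -> F).
  by move=> x y; rewrite -!horner_Ppoly => /P_inj.
have coprime_rs : coprime r s.
  by apply: (Pfun_inj_coprime Pinj); rewrite ?qE' dvdn_mull.
have even_s : ~~ odd s.
  have : ~~ odd #|F|.-1 by rewrite -subn1 oddB ?qE ?expn_gt0 ?prime_gt0 // oddX odd_p orbT.
  by rewrite qE' oddM odd_l.
have odd_r : odd r.
  apply: contraLR coprime_rs => even_r.
  have : (2 %| gcdn r s)%N by rewrite dvdn_gcd !dvdn2 even_r.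
  by apply: contraL => /eqP->.
split => //.
- have two_s : 2 ^+ s = 1 :> F.
    by rewrite -(prod_nonzero_exprD1 qE' odd_l coprime_le) (Pfun_inj_prod_nonzero Pinj).
  by rewrite (dvdn_pcharf (card_finPcharP qE prime_p)) natrB ?expn_gt0 // natrX two_s subrr.
- have [g gP] := finField_prim_root F; rewrite qE' in gP.
  exact: (Pfun_inj_not_dvd Pinj (dvdn_prim_root gP (dvdn_mulr s (dvdnn l))) l_gt2).
Qed.
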